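(* Let $\mathsf{M}$ be the subspace of $\ell_1$ with underlying set $\{x \in \prod_{i\in\mathbb{N}} M_i : \sum_i |x(i)|<\infty\}$, where $M_i = \{ j\cdot 2^{-i} \mid j \in \{0,\dots,2^i\}\}$. Then the Polish space $\mathsf{M}$ is a retract (in QCB) of $\mathsf{2}^{\mathbb{N}\times\mathbb{F}}$ and of $\mathbb{N}^{\mathbb{N}^{\mathbb{N}}}$.
   Context: $\ell_1$ carries the metric $\|x-y\|_1=\sum_i|x(i)-y(i)|$. QCB is the cartesian closed category of topological quotients of countably based spaces; exponentials $Y^X$ are the sets of continuous maps with the sequentialisation of the compact-open topology. $\mathbb{N}$ is discrete, $\mathbb{N}^{\mathbb{N}}$ is Baire space, $\mathsf{2}=\{\mathtt{0},\mathtt{1}\}$ discrete, and the countable fan $\mathbb{F}$ is $\mathbb{N}^2\cup\{(\infty,\infty)\}$ with metric $d((a,b),(\infty,\infty))=2^{-a}$, $d((a,b),(a',b'))=\max\{2^{-a},2^{-a'}\}$ for distinct points of $\mathbb{N}^2$. $X$ is a retract of $Y$ if there are continuous $e\colon X\to Y$, $r\colon Y\to X$ with $r\circ e=\mathrm{id}_X$. *)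

From HB Require Import structures.
From mathcomp Require Import all_boot all_order all_algebra.
From mathcomp Require Import all_classical all_reals all_analysis.
From mathcomp Require Import Rstruct Rstruct_topology.
Notation R := Rdefinitions.R (only parsing).

Set Implicit Arguments.
Unset Strict Implicit.
Unset Printing Implicit Defensive.
Import Order.TTheory GRing.Theory Num.Theory.
Local Open Scope classical_set_scope.
Local Open Scope ring_scope.

Definition metric_open {T : Type} (d : T -> T -> R) : set_system T :=
  [set A | forall x, A x -> exists2 e : R, 0 < e & [set y | d x y < e] `<=` A].

Lemma metric_openT {T : Type} (d : T -> T -> R) : metric_open d setT.
Proof. by move=> x _; exists 1 => //. Qed.

Lemma metric_openI {T : Type} (d : T -> T -> R) : setI_closed (metric_open d).
Proof.
move=> A B oA oB x [Ax Bx].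
have [e1 e10 h1] := oA x Ax; have [e2 e20 h2] := oB x Bx.
exists (Num.min e1 e2); first by rewrite lt_min e10 e20.
move=> y /= dy; split.
- by apply: h1 => /=; apply: (lt_le_trans dy); rewrite ge_min lexx.
- by apply: h2 => /=; apply: (lt_le_trans dy); rewrite ge_min lexx orbT.
Qed.

Lemma metric_open_bigU {T : Type} (d : T -> T -> R) (I : Type) (f : I -> set T) :
  (forall i, metric_open d (f i)) -> metric_open d (\bigcup_i f i).
Proof.
move=> hf x [i _ fxi]; have [e e0 h] := hf i x fxi.
by exists e => // y dy; exists i => //; apply: h.
Qed.

Definition seq_open (T : topologicalType) : set_system T :=
  [set A | forall x, A x -> forall u : nat -> T, u @ \oo --> x ->
     \forall n \near \oo, A (u n)].
Arguments seq_open : clear implicits.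

Lemma seq_openT (T : topologicalType) : seq_open T setT.
Proof. by move=> x _ u _; apply: nearW. Qed.

Lemma seq_openI (T : topologicalType) : setI_closed (seq_open T).
Proof.
move=> A B oA oB x [Ax Bx] u ux.
have hA := oA x Ax u ux; have hB := oB x Bx u ux.
by near=> n; split; [near: n; exact: hA | near: n; exact: hB].
Unshelve. all: by end_near.
Qed.

Lemma seq_open_bigU (T : topologicalType) (I : Type) (f : I -> set T) :
  (forall i, seq_open T (f i)) -> seq_open T (\bigcup_i f i).
Proof.
move=> hf x [i _ fxi] u ux; have h := hf i x fxi u ux.
by near=> n; exists i => //; near: n; exact: h.
Unshelve. all: by end_near.
Qed.

Definition seqtop (T : topologicalType) : Type := T.
HB.instance Definition _ (T : topologicalType) := Choice.on (seqtop T).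
HB.instance Definition _ (T : topologicalType) :=
  isOpenTopological.Build (seqtop T) (@seq_openT T) (@seq_openI T)
    (@seq_open_bigU T).

(* QCB exponential Y^X: the set of continuous maps X -> Y, with the    *)
(* sequentialization of the compact-open topology.                     *)
Definition cont_maps (X Y : topologicalType) : set (@compact_open X Y) :=
  [set f | continuous (f : X -> Y)].
Arguments cont_maps : clear implicits.
Definition qcb_exp (X Y : topologicalType) : Type :=
  seqtop (set_type (cont_maps X Y)).

Definition Mi (i : nat) : set R :=
  [set r | exists j : nat, (j <= 2 ^ i)%N /\ r = j%:R / 2%:R ^+ i].

Definition l1 : set (nat -> R) := [set x : nat -> R | cvgn (series (fun i => `|x i|))].

Definition Mset : set (nat -> R) := [set x | (forall i, Mi i (x i)) /\ l1 x].

Definition l1dist (x y : nat -> R) : R := limn (series (fun i => `|x i - y i|)).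

Definition Mspace : Type := set_type Mset.
HB.instance Definition _ := Choice.on Mspace.
Definition Mdist (x y : Mspace) : R := l1dist (set_val x) (set_val y).
HB.instance Definition _ :=
  isOpenTopological.Build Mspace (metric_openT Mdist) (@metric_openI _ Mdist)
    (@metric_open_bigU _ Mdist).

(* The countable fan F = N^2 u {(oo,oo)}; None stands for (oo,oo).     *)
Definition Fan : Type := option (nat * nat).
HB.instance Definition _ := Choice.on Fan.
Definition pow2m (a : nat) : R := (2%:R ^+ a)^-1.
Definition Fdist (p q : Fan) : R :=
  match p, q with
  | None, None => 0
  | Some (a, _), None => pow2m a
  | None, Some (a, _) => pow2m a
  | Some (a, b), Some (a', b') =>
      if (a, b) == (a', b') then 0 else Num.max (pow2m a) (pow2m a')
  end.
HB.instance Definition _ :=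
  isOpenTopological.Build Fan (metric_openT Fdist) (@metric_openI _ Fdist)
    (@metric_open_bigU _ Fdist).

Definition BaireSpace : Type := {ptws nat -> nat}.

Definition retract (X Y : topologicalType) : Prop :=
  exists (e : X -> Y) (r : Y -> X),
    [/\ continuous e, continuous r & forall x, r (e x) = x].

(* Encode x in M as a continuous g : N x F -> 2.  Column 2i+1 writes x(i) in
   unary: g(2i+1, (a, b)) says (a+1) 2^-i <= x(i).  Column 2m flags the windows
   of mass at least 2^-m: g(2m, (a, b)) says 2^-m <= x(a) + ... + x(b-1).  All
   columns vanish at oo; continuity at (2m, oo) is then exactly the fact that
   the tails of the l_1 sequence x are eventually below 2^-m.
   To decode an arbitrary continuous g, read x(i) off column 2i+1 but keep it
   only if each window [a, i+1) with a, m <= i of mass at least 2^-m is flagged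
   in column 2m.  Since column 2m is constant from some a on, the decoded
   sequence has tails below 2^-m there; this makes it summable, and since
   convergence in the compact-open topology is uniform on the compact sets
   {(c, oo)} u {(c, q_j)} with q_j -> oo, decoding is sequentially continuous.
   For the second retraction N x F is a retract of Baire space and 2 one of N,
   and Y^X is functorial in retractions.  Throughout, continuity is checked on
   sequences: M is metric and the exponential carries a sequential topology. *)

From HB Require Import structures.
From mathcomp Require Import all_boot all_order all_algebra.
From mathcomp Require Import all_classical all_reals all_analysis.
From mathcomp Require Import Rstruct Rstruct_topology.
From mathcomp Require Import finmap ring lra zify.

Set Implicit Arguments.
Unset Strict Implicit.
Unset Printing Implicit Defensive.
Import Order.TTheory GRing.Theory Num.Theory numFieldNormedType.Exports.
Local Open Scope classical_set_scope.
Local Open Scope ring_scope.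

Section NonnegSeries.
Variables (R : realType) (u : R ^nat).
Hypothesis u_ge0 : forall k, 0 <= u k.

Lemma ler_sum_subwindow a a' b' b : (a <= a')%N -> (b' <= b)%N ->
  \sum_(a' <= k < b') u k <= \sum_(a <= k < b) u k.
Proof.
move=> aa' b'b; apply: (@le_trans _ _ (\sum_(a' <= k < b) u k)).
  by apply: nondecreasing_series => // k _ _; exact: u_ge0.
have [a'b|ba'] := leqP a' b; last by rewrite big_geq ?(ltnW ba') // sumr_ge0.
by rewrite (@big_cat_nat _ _ _ a' a b) //= lerDr sumr_ge0.
Qed.

Lemma series_nondecreasing : {homo series u : n m / (n <= m)%N >-> n <= m}.
Proof. by move=> n m nm; exact: ler_sum_subwindow. Qed.

Lemma is_cvg_series_bounded (M : R) :
  (forall n, series u n <= M) -> cvgn (series u).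
Proof.
move=> ub; apply: nondecreasing_is_cvgn; first exact: series_nondecreasing.
by exists M => _ [n _ <-].
Qed.

Lemma ler_sum_limn a b : cvgn (series u) ->
  \sum_(a <= k < b) u k <= limn (series u).
Proof.
move=> cu; apply: le_trans (nondecreasing_cvgn_le series_nondecreasing cu b).
exact: ler_sum_subwindow.
Qed.

Lemma series_tail_lt (e : R) : cvgn (series u) -> 0 < e ->
  exists a, forall b, \sum_(a <= k < b) u k < e.
Proof.
move=> cu e0; have /cvgrPdist_lt/(_ e e0) [a _ ha] := cu.
exists a => b; have [ab|ba] := leqP a b; last by rewrite big_geq ?(ltnW ba).
have := ha a (leqnn a); rewrite ger0_norm ?subr_ge0; last first.
  exact: nondecreasing_cvgn_le series_nondecreasing cu a.
have := ler_sum_limn 0 b cu; rewrite (@big_cat_nat _ _ _ a 0 b) //=.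
rewrite /series /=; lra.
Qed.

End NonnegSeries.

Section L1.
Implicit Types x y z : nat -> R.

Lemma l1_sub x y : l1 x -> l1 y -> cvgn (series (fun i => `|x i - y i|)).
Proof.
move=> lx ly; apply: (@series_le_cvg _ _ ((fun i => `|x i|) + (fun i => `|y i|))).
- by move=> i; exact: normr_ge0.
- by move=> i; rewrite addr_ge0.
- by move=> i; exact: ler_normB.
- exact: is_cvg_seriesD.
Qed.

Lemma ler_sum_l1dist x y a b : l1 x -> l1 y ->
  \sum_(a <= k < b) `|x k - y k| <= l1dist x y.
Proof. by move=> lx ly; apply: ler_sum_limn => [k|]; [exact: normr_ge0|exact: l1_sub]. Qed.

Lemma l1dist_le x y (M : R) : l1 x -> l1 y ->
  (forall n, \sum_(0 <= k < n) `|x k - y k| <= M) -> l1dist x y <= M.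
Proof. by move=> lx ly ub; apply: limr_le; [exact: l1_sub|exact: nearW]. Qed.

Lemma l1distC x y : l1dist x y = l1dist y x.
Proof.
have xy : (fun i => `|x i - y i|) = (fun i => `|y i - x i|).
  by apply: funext => i; rewrite distrC.
by rewrite /l1dist xy.
Qed.

Lemma l1dist_triangle x y z : l1 x -> l1 y -> l1 z ->
  l1dist x z <= l1dist x y + l1dist y z.
Proof.
move=> lx ly lz; apply: l1dist_le => // n.
apply: le_trans (lerD (ler_sum_l1dist 0 n lx ly) (ler_sum_l1dist 0 n ly lz)).
rewrite -big_split /=; apply: ler_sum_nat => i _.
by rewrite (_ : x i - z i = (x i - y i) + (y i - z i)) ?ler_normD //; ring.
Qed.

Lemma ler_dist_l1dist x y i : l1 x -> l1 y -> `|x i - y i| <= l1dist x y.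
Proof. by move=> lx ly; have := ler_sum_l1dist i i.+1 lx ly; rewrite big_nat1. Qed.

Lemma ler_sum_window x y a b : l1 x -> l1 y ->
  \sum_(a <= k < b) x k <= \sum_(a <= k < b) y k + l1dist x y.
Proof.
move=> lx ly; rewrite -lerBlDl -sumrB; apply: le_trans (ler_sum_l1dist a b lx ly).
by apply: ler_sum_nat => i _; exact: ler_norm.
Qed.

Lemma l1dist_agree_le x y A (B : R) : l1 x -> l1 y ->
  (forall k, (k < A)%N -> x k = y k) ->
  (forall b, \sum_(A <= k < b) `|x k| <= B) ->
  (forall b, \sum_(A <= k < b) `|y k| <= B) -> l1dist x y <= B + B.
Proof.
move=> lx ly xy bx By; apply: l1dist_le => // n.
have head0 m : (m <= A)%N -> \sum_(0 <= k < m) `|x k - y k| = 0.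
  move=> mA; rewrite big_nat big1 // => k /andP[_ km].
  by rewrite xy ?subrr ?normr0 // (leq_trans km mA).
have [An|nA] := leqP A n; last first.
  have B0 : 0 <= B by have := bx A; rewrite big_geq.
  by rewrite head0 ?addr_ge0 // ltnW.
rewrite (@big_cat_nat _ _ _ A 0 n) //= head0 // add0r.
apply: le_trans (lerD (bx n) (By n)); rewrite -big_split /=.
by apply: ler_sum_nat => k _; exact: ler_normB.
Qed.

End L1.

Lemma pow2m_gt0 i : 0 < pow2m i.
Proof. by rewrite /pow2m invr_gt0 exprn_gt0. Qed.

Lemma pow2m_half i : pow2m i.+1 + pow2m i.+1 = pow2m i.
Proof. by rewrite /pow2m exprS invfM; field. Qed.

Lemma pow2m_le i j : (i <= j)%N -> pow2m j <= pow2m i.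
Proof.
by move=> ij; rewrite /pow2m lef_pV2 ?posrE ?exprn_gt0 // ler_eXn2l // ltr1n.
Qed.

Lemma pow2m_lt (e : R) : 0 < e -> exists m, pow2m m < e.
Proof.
move=> e0; have [n en] : exists n : nat, e^-1 < n%:R.
  by exists (Num.Def.archi_bound e^-1); exact: unstable.ltr_bound.
exists n; rewrite /pow2m -ltf_pV2 ?posrE ?exprn_gt0 ?invr_gt0 // invrK.
by apply: (lt_trans en); rewrite -natrX ltr_nat ltn_expl.
Qed.

Lemma Mi_ge0 i r : Mi i r -> 0 <= r.
Proof. by move=> [j [_ ->]]; rewrite divr_ge0 // exprn_ge0. Qed.

Lemma Mi_le1 i r : Mi i r -> r <= 1.
Proof.
move=> [j [ji ->]]; rewrite ler_pdivrMr ?exprn_gt0 // mul1r.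
by rewrite -natrX ler_nat.
Qed.

Lemma Mi0 i : Mi i 0.
Proof. by exists 0%N; rewrite mul0r. Qed.

Lemma Mi_eq i r s : Mi i r -> Mi i s -> `|r - s| < pow2m i -> r = s.
Proof.
move=> [j [_ ->]] [j' [_ ->]]; rewrite -mulrBl normrM /pow2m.
rewrite [X in _ * X]ger0_norm ?invr_ge0 ?exprn_ge0 // gtr_pMl ?invr_gt0 ?exprn_gt0 //.
have [jj'|j'j|-> //] := ltngtP j j'; rewrite ltNge.
  by rewrite distrC -natrB ?(ltnW jj') // normr_nat ler1n subn_gt0 jj'.
by rewrite -natrB ?(ltnW j'j) // normr_nat ler1n subn_gt0 j'j.
Qed.

Lemma Mset_ge0 x : Mset x -> forall i, 0 <= x i.
Proof. by move=> [Mx _] i; exact: Mi_ge0 (Mx i). Qed.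

Lemma Mset_cvg x : Mset x -> cvgn (series x).
Proof.
move=> Mx; have xE : (fun i => `|x i|) = x.
  by apply: funext => i; rewrite ger0_norm // (Mset_ge0 Mx).
by have := Mx.2; rewrite /l1 /= xE.
Qed.

Lemma Mset_val (x : Mspace) : Mset (set_val x).
Proof. exact: set_mem (valP x). Qed.

Lemma l1_val (x : Mspace) : l1 (set_val x).
Proof. by case: (Mset_val x). Qed.

Lemma Mdist_triangle (x y z : Mspace) : Mdist x z <= Mdist x y + Mdist y z.
Proof. by apply: l1dist_triangle; exact: l1_val. Qed.

Lemma Mdistxx (x : Mspace) : Mdist x x = 0.
Proof.
apply/eqP; rewrite eq_le; apply/andP; split; last first.
  by have := ler_sum_l1dist 0 0 (@l1_val x) (@l1_val x); rewrite big_geq.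
apply: l1dist_le; try exact: l1_val.
by move=> n; rewrite big1 // => i _; rewrite subrr normr0.
Qed.

Lemma nbhs_Mball (x : Mspace) (e : R) : 0 < e -> nbhs x [set y | Mdist x y < e].
Proof.
move=> e0; apply: open_nbhs_nbhs; split; last by rewrite /= Mdistxx.
move=> y /= xy; exists (e - Mdist x y); first by rewrite subr_gt0.
by move=> z /= yz; have := Mdist_triangle x y z; lra.
Qed.

Lemma Mball_nbhs (x : Mspace) (V : set Mspace) : nbhs x V ->
  exists2 e : R, 0 < e & [set y | Mdist x y < e] `<=` V.
Proof.
rewrite nbhsE => -[B [oB Bx] BV]; have [e e0 eB] := oB x Bx.
by exists e => // y /eB /BV.
Qed.

Lemma cvg_MspaceP (u : nat -> Mspace) (x : Mspace) : u @ \oo --> x <->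
  (forall e : R, 0 < e -> \forall n \near \oo, Mdist x (u n) < e).
Proof.
split=> [ux e e0|ux V /Mball_nbhs [e e0 eV]]; first exact: ux _ (nbhs_Mball x e0).
by apply: filterS (ux e e0) => n /eV.
Qed.

Definition Ftail (a0 : nat) : set Fan :=
  [set q | if q is Some (a, _) then (a0 <= a)%N else True].

Lemma pow2m_le_Fdist a b q : q <> Some (a, b) -> pow2m a <= Fdist (Some (a, b)) q.
Proof.
case: q => [[a' b']|] qab //=; case: ifPn => [/eqP abE|_]; first by rewrite abE in qab.
by rewrite le_max lexx.
Qed.

Lemma open_Fan_point (p : nat * nat) : open [set (Some p : Fan)].
Proof.
move=> _ ->; case: p => a b; exists (pow2m a); first exact: pow2m_gt0.
move=> q /= qab; apply: contrapT => /pow2m_le_Fdist.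
by rewrite leNgt qab.
Qed.

Lemma open_Ftail a0 : open (Ftail a0).
Proof.
move=> q; case: q => [[a b] /= a0a|_].
  exists (pow2m a); first exact: pow2m_gt0.
  move=> q /= qab; have [-> //|/pow2m_le_Fdist] := pselect (q = Some (a, b)).
  by rewrite leNgt qab.
exists (pow2m a0); first exact: pow2m_gt0.
case=> [[a b]|] //= a0a; rewrite leqNgt; apply/negP => aa0.
by move: a0a; apply/negP; rewrite -leNgt pow2m_le // ltnW.
Qed.

Lemma nbhs_Fan_None (V : set Fan) : nbhs (None : Fan) V ->
  exists a0, forall a b, (a0 <= a)%N -> V (Some (a, b)).
Proof.
rewrite nbhsE => -[B [oB BN] BV]; have [e e0 eB] := oB None BN.
have [m me] := pow2m_lt e0; exists m => a b ma; apply/BV/eB => /=.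
exact: le_lt_trans (pow2m_le ma) me.
Qed.

Lemma discrete_continuous (X : discreteTopologicalType) (Y : topologicalType)
  (f : X -> Y) : continuous f.
Proof. by move=> x V /nbhs_singleton Vfx; apply: filterS (discrete_set1 x) => _ ->. Qed.

Lemma nbhs_pair (c : nat) (q : Fan) (V : set (nat * Fan)) (W : set Fan) :
  nbhs q W -> (forall q', W q' -> V (c, q')) -> nbhs (c, q) V.
Proof.
move=> qW WV; exists ([set c], W) => /=; first by split=> //; exact: discrete_set1.
by case=> c' q' /= [-> ?]; exact: WV.
Qed.

Lemma nbhs_pair_column (c : nat) (q : Fan) (V : set (nat * Fan)) :
  nbhs (c, q) V -> nbhs q (fun q' => V (c, q')).
Proof.
case=> -[A W] /= [cA qW] AWV; apply: filterS qW => q' Wq'.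
by apply: (AWV (c, q')); split=> //=; exact: nbhs_singleton cA.
Qed.

Lemma continuous_column_tail (Y : discreteTopologicalType) (g : nat * Fan -> Y) :
  continuous g ->
  forall c, exists a0, forall a b, (a0 <= a)%N -> g (c, Some (a, b)) = g (c, None).
Proof.
move=> gC c; have := gC (c, None) _ (discrete_set1 (g (c, None))).
by move=> /nbhs_pair_column /nbhs_Fan_None.
Qed.

Lemma column_tail_continuous (Y : topologicalType) (g : nat * Fan -> Y) :
  (forall c, exists a0, forall a b, (a0 <= a)%N -> g (c, Some (a, b)) = g (c, None)) ->
  continuous g.
Proof.
move=> gtail [c q] V /= gV; have Vg := nbhs_singleton gV.
case: q gV Vg => [p|] gV Vg.
  apply: (@nbhs_pair c (Some p) _ [set Some p]); last by move=> _ ->.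
  by apply: open_nbhs_nbhs; split; [exact: open_Fan_point|].
have [a0 ga0] := gtail c; apply: (@nbhs_pair c None _ (Ftail a0)).
  by apply: open_nbhs_nbhs; split; [exact: open_Ftail|].
by case=> [[a b]|] //= a0a; rewrite ga0.
Qed.

Lemma compact_cvg_range (T : ptopologicalType) (p : nat -> T) (x : T) :
  p @ \oo --> x -> compact (x |` range p).
Proof.
move=> px; rewrite compact_cover => J D f fo cov.
have [i0 Di0 fi0] := cov x (or_introl erefl).
have [A _ Ap] := px _ (open_nbhs_nbhs (conj (fo i0 Di0) fi0)).
have ipP j : exists i, D i /\ f i (p j).
  by have [i Di fi] := cov (p j) (or_intror (ex_intro2 _ _ j Logic.I erefl)); exists i.
have [ip {}ipP] := choice ipP.
exists (seq_fset tt (i0 :: map ip (iota 0 A))).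
  move=> i; rewrite seq_fsetE inE => /orP[/eqP ->|/mapP[j _ ->]]; apply: mem_set => //.
  by case: (ipP j).
have i0D : i0 \in seq_fset tt (i0 :: map ip (iota 0 A)) by rewrite seq_fsetE mem_head.
move=> _ [-> | [j _ <-]]; first by exists i0.
have [jA|Aj] := ltnP j A; last by exists i0 => //; exact: Ap.
exists (ip j); last by case: (ipP j).
suff : ip j \in seq_fset tt (i0 :: map ip (iota 0 A)) by [].
by rewrite seq_fsetE in_cons map_f ?orbT // mem_iota.
Qed.

Lemma compact_open_cvg_locally (X : ptopologicalType) (Y : topologicalType)
  (u : nat -> X -> Y) (g : X -> Y) :
  (forall p, exists W : set X, [/\ open W, W p &
     \forall n \near \oo, forall q, W q -> u n q = g q]) ->
  (u n : {compact-open, X -> Y}) @[n --> \oo] --> (g : {compact-open, X -> Y}).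
Proof.
move=> loc; apply/compact_open_cvgP => K O cK oO gKO; have [W WP] := choice loc.
move: cK; rewrite compact_cover => /(_ _ K W) [p _|p Kp|D _ KD].
- by case: (WP p).
- by exists p => //; case: (WP p).
have agreeD := @filter_bigI _ _ D (fun p => [set n | forall q, W p q -> u n q = g q])
  \oo _ (fun p _ => let: And3 _ _ agree := WP p in agree).
suff : \forall n \near \oo, u n @` K `<=` O by [].
have [N _ agreeN] := agreeD; exists N => // n /agreeN agree _ [q Kq <-].
have [p Dp Wpq] := KD q Kq.
by rewrite (agree p Dp q Wpq); apply: gKO; exists q.
Qed.

Lemma compact_open_cvg_pointwise (X : topologicalType) (Y : discreteTopologicalType)
  (u : nat -> X -> Y) (g : X -> Y) :
  (u n : {compact-open, X -> Y}) @[n --> \oo] --> (g : {compact-open, X -> Y}) ->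
  forall p, \forall n \near \oo, u n p = g p.
Proof.
move=> /compact_open_cvgP ug p.
have gp : g @` [set p] `<=` [set g p] by move=> _ [_ -> <-].
have [N _ uN] := ug _ _ (@compact_set1 _ p) (discrete_open _) gp.
by exists N => // n /uN up; apply: up; exists p.
Qed.

(* A pointed copy of [nat * Fan], since [compact_cover] is stated for pointed spaces. *)
Definition natFan : Type := (nat * Fan)%type.
HB.instance Definition _ := Topological.on natFan.
HB.instance Definition _ := isPointed.Build natFan (0%N, None).

Lemma compact_open_cvg_natFan (Y : topologicalType) (u : nat -> nat * Fan -> Y)
  (g : nat * Fan -> Y) :
  (forall p, \forall n \near \oo, u n p = g p) ->
  (forall c, exists a0, \forall n \near \oo, forall a b, (a0 <= a)%N ->
     u n (c, Some (a, b)) = g (c, Some (a, b))) ->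
  (u n : {compact-open, (nat * Fan)%type -> Y}) @[n --> \oo] -->
    (g : {compact-open, (nat * Fan)%type -> Y}).
Proof.
move=> pt tail; apply: (@compact_open_cvg_locally natFan) => -[c [q|]].
  exists [set (c, Some q)]; split=> //.
    rewrite openE => _ ->; apply: (@nbhs_pair c (Some q) _ [set Some q]).
      by apply: open_nbhs_nbhs; split; [exact: open_Fan_point|].
    by move=> _ ->.
  by apply: filterS (pt (c, Some q)) => n un _ ->.
have [a0 ua0] := tail c; exists [set p : nat * Fan | p.1 = c /\ Ftail a0 p.2]; split=> //.
  rewrite openE => -[_ q] /= [-> a0q]; apply: (@nbhs_pair c q _ (Ftail a0)) => //.
  by apply: open_nbhs_nbhs; split; [exact: open_Ftail|].
apply: filterS (filterI (pt (c, None)) ua0) => n [un ua] [_ [[a b]|]] /= [-> a0a] //.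
exact: ua.
Qed.

Lemma compact_open_cvg_column_tail (Y : discreteTopologicalType)
  (u : nat -> nat * Fan -> Y) (g : nat * Fan -> Y) : continuous g ->
  (u n : {compact-open, (nat * Fan)%type -> Y}) @[n --> \oo] -->
    (g : {compact-open, (nat * Fan)%type -> Y}) ->
  forall c, exists a0, \forall n \near \oo, forall a b, (a0 <= a)%N ->
    u n (c, Some (a, b)) = g (c, None).
Proof.
move=> gC ug c; have [k0 gk0] := continuous_column_tail gC c.
apply: contrapT => nott.
have bad j : exists t : nat * (nat * nat),
    [/\ (j <= t.1)%N, (maxn k0 j <= t.2.1)%N & u t.1 (c, Some t.2) <> g (c, None)].
  apply: contrapT => nobad; apply: nott; exists (maxn k0 j); exists j => // n /= jn a b ja.
  by apply: contrapT => neq; apply: nobad; exists (n, (a, b)).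
have [t tP] := choice bad.
pose p j : nat * Fan := (c, Some (t j).2).
have p_cvg : p @ \oo --> ((c, None) : nat * Fan).
  move=> V /nbhs_pair_column /nbhs_Fan_None [a0 Va0]; exists a0 => // j /= a0j.
  rewrite /p; case: (t j) (tP j) => n [a b] /= [_ ja _]; apply: Va0.
  by rewrite (leq_trans a0j) // (leq_trans _ ja) ?leq_maxr.
have gK : g @` ((c, None) |` range p) `<=` [set g (c, None)].
  move=> _ [_ [->|[j _ <-]] <-] //=; rewrite /p.
  case: (t j) (tP j) => n [a b] /= [_ ja _].
  by apply: gk0; rewrite (leq_trans _ ja) ?leq_maxl.
(* [g] is constant on the compact set formed by [(c, oo)] and the bad points. *)
have := proj1 (compact_open_cvgP _ _) ug _ _ (@compact_cvg_range natFan p _ p_cvg)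
  (discrete_open _) gK.
move=> [N _ uN]; have [Nt _ uNt] := tP N; apply: uNt; apply: (uN _ Nt).
by exists (p N) => //; right; exists N.
Qed.

Lemma compact_open_cvg_comp (X X' Y Y' : topologicalType) (r : X' -> X) (s : Y -> Y')
  (u : nat -> X -> Y) (g : X -> Y) : continuous r -> continuous s ->
  (u n : {compact-open, X -> Y}) @[n --> \oo] --> (g : {compact-open, X -> Y}) ->
  (s \o u n \o r : {compact-open, X' -> Y'}) @[n --> \oo] -->
    (s \o g \o r : {compact-open, X' -> Y'}).
Proof.
move=> rC sC /compact_open_cvgP ug; apply/compact_open_cvgP => K O cK oO gKO.
have crK : compact (r @` K).
  by apply: continuous_compact => //; exact: continuous_subspaceT.
have oO' : open (s @^-1` O) by move/continuousP: sC; apply.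
have grK : g @` (r @` K) `<=` s @^-1` O by move=> _ [_ [k Kk <-] <-]; apply: gKO; exists k.
have [N _ uN] := ug _ _ crK oO' grK; exists N => // n /uN un _ [k Kk <-].
by apply: un; exists (r k) => //; exists k.
Qed.

Lemma cvg_seqtop (B : topologicalType) (v : nat -> B) (y : B) :
  v @ \oo --> y -> (v : nat -> seqtop B) @ \oo --> (y : seqtop B).
Proof.
move=> vy V; rewrite nbhsE => -[U [oU Uy] UV].
by apply: filterS (oU y Uy v vy) => n /UV.
Qed.

Lemma seq_continuous_seqtop (A C : topologicalType) (f : A -> C) :
  (forall (u : nat -> A) x, u @ \oo --> x -> f \o u @ \oo --> f x) ->
  continuous (f : seqtop A -> C).
Proof.
move=> fS x V; rewrite nbhsE => -[U [oU Ufx] UV].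
rewrite nbhsE; exists (f @^-1` U); last by move=> y /UV.
split=> //; move=> y Ufy u uy; exact: fS u y uy _ (open_nbhs_nbhs (conj oU Ufy)).
Qed.

Lemma Mspace_seq_continuous (C : topologicalType) (h : Mspace -> C) :
  (forall (u : nat -> Mspace) x, u @ \oo --> x -> h \o u @ \oo --> h x) ->
  continuous h.
Proof.
move=> hS x V hxV; apply: contrapT => nV.
have far n : exists y : Mspace, Mdist x y < pow2m n /\ ~ V (h y).
  apply: contrapT => near_in; apply: nV.
  apply: filterS (nbhs_Mball x (pow2m_gt0 n)) => y xy.
  by apply: contrapT => nVy; apply: near_in; exists y.
have [y yP] := choice far.
have yx : y @ \oo --> x.
  apply/cvg_MspaceP => e e0; have [m me] := pow2m_lt e0.
  exists m => // n /= mn; apply: lt_trans (yP n).1 _.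
  exact: le_lt_trans (pow2m_le mn) me.
have [N _ VN] := hS y x yx V hxV; exact: (yP N).2 (VN N (leqnn N)).
Qed.

Lemma cvg_cont_mapsP (X Y : topologicalType) (u : nat -> set_type (cont_maps X Y))
  (g : set_type (cont_maps X Y)) :
  u @ \oo --> g <-> (set_val (u n) : {compact-open, X -> Y}) @[n --> \oo] -->
                     (set_val g : {compact-open, X -> Y}).
Proof.
split=> [ug A|ug V].
  rewrite nbhsE => -[B [oB Bg] BA].
  have : nbhs g (set_val @^-1` B : set (set_type (cont_maps X Y))).
    by apply: open_nbhs_nbhs; split=> //; exists B.
  by move=> /ug [N _ uN]; exists N => // n /uN /BA.
rewrite nbhsE => -[B [[A oA <-] Bg] BV].
have /ug [N _ uN] := open_nbhs_nbhs (conj oA Bg).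
by exists N => // n /uN /BV.
Qed.

Lemma retract_trans (X Y Z : topologicalType) :
  retract X Y -> retract Y Z -> retract X Z.
Proof.
move=> [e1 [r1 [e1C r1C r1e1]]] [e2 [r2 [e2C r2C r2e2]]].
exists (e2 \o e1), (r1 \o r2); split.
- by move=> x; apply: continuous_comp; [exact: e1C|exact: e2C].
- by move=> z; apply: continuous_comp; [exact: r2C|exact: r1C].
- by move=> x /=; rewrite r2e2 r1e1.
Qed.

Lemma cont_maps_val (X Y : topologicalType) (f : set_type (cont_maps X Y)) :
  continuous (set_val f : X -> Y).
Proof. exact: set_mem (valP f). Qed.

Section QcbExpMap.
Variables (X X' Y Y' : topologicalType) (r : X' -> X) (s : Y -> Y').
Hypotheses (rC : continuous r) (sC : continuous s).

Lemma cont_maps_comp (f : qcb_exp X Y) : continuous (s \o set_val f \o r).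
Proof.
move=> x; apply: continuous_comp; first exact: rC.
by apply: continuous_comp; [exact: cont_maps_val|exact: sC].
Qed.

Definition qcb_exp_map (f : qcb_exp X Y) : qcb_exp X' Y' :=
  exist _ (s \o set_val f \o r : {compact-open, X' -> Y'}) (mem_set (@cont_maps_comp f)).

Lemma qcb_exp_map_continuous : continuous qcb_exp_map.
Proof.
apply: seq_continuous_seqtop => u f uf; apply: cvg_seqtop; apply/cvg_cont_mapsP.
exact: compact_open_cvg_comp rC sC (proj1 (cvg_cont_mapsP _ _) uf).
Qed.

End QcbExpMap.

Lemma retract_qcb_exp (X X' Y Y' : topologicalType) :
  retract X X' -> retract Y Y' -> retract (qcb_exp X Y) (qcb_exp X' Y').
Proof.
move=> [e [r [eC rC re]]] [s [t [sC tC ts]]].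
exists (qcb_exp_map rC sC), (qcb_exp_map eC tC).
split; [exact: qcb_exp_map_continuous|exact: qcb_exp_map_continuous|].
move=> f; apply: val_inj; apply: funext => x.
by change (t (s (set_val f (r (e x)))) = set_val f x); rewrite re ts.
Qed.

Lemma double_cases c : (exists i, c = i.*2.+1) \/ (exists m, c = m.*2).
Proof.
by case oc: (odd c); [left|right]; exists c./2; rewrite -[LHS]odd_double_half oc.
Qed.

Lemma near_forall_ltn (T : Type) (F : set_system T) (P : nat -> T -> Prop) K :
  Filter F -> (forall k, (k < K)%N -> \forall x \near F, P k x) ->
  \forall x \near F, forall k, (k < K)%N -> P k x.
Proof.
move=> FF FP; have := @filter_forall T _ (fun k : 'I_K => P k) F FF (fun k => FP k (ltn_ord k)).
by apply: filterS => x Px k kK; exact: (Px (Ordinal kK)).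
Qed.

Definition encode (x : nat -> R) (p : nat * Fan) : bool :=
  if p is (c, Some (a, b)) then
    if odd c then (a.+1)%:R * pow2m c./2 <= x c./2
    else pow2m c./2 <= \sum_(a <= k < b) x k
  else false.

Lemma encode_odd x i a b :
  encode x (i.*2.+1, Some (a, b)) = ((a.+1)%:R * pow2m i <= x i).
Proof. by rewrite /= odd_double /= uphalf_double. Qed.

Lemma encode_even x m a b :
  encode x (m.*2, Some (a, b)) = (pow2m m <= \sum_(a <= k < b) x k).
Proof. by rewrite /= odd_double doubleK. Qed.

Lemma unary_bit_large x i a : Mset x -> (2 ^ i <= a)%N ->
  ((a.+1)%:R * pow2m i <= x i) = false.
Proof.
move=> Mx ia; apply/negbTE; rewrite -ltNge; apply: le_lt_trans (Mi_le1 (Mx.1 i)) _.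
by rewrite /pow2m -natrX ltr_pdivlMr ?ltr0n ?expn_gt0 // mul1r ltr_nat ltnS.
Qed.

Lemma encode_column_tail x : Mset x -> forall c, exists a0, forall a b,
  (a0 <= a)%N -> encode x (c, Some (a, b)) = false.
Proof.
move=> Mx c; have [[i ->]|[m ->]] := double_cases c.
  by exists (2 ^ i)%N => a b ia; rewrite encode_odd unary_bit_large.
have [a0 a0x] := series_tail_lt (Mset_ge0 Mx) (Mset_cvg Mx) (pow2m_gt0 m).
exists a0 => a b a0a; rewrite encode_even; apply/negbTE; rewrite -ltNge.
by apply: le_lt_trans (a0x b); apply: ler_sum_subwindow => //; exact: Mset_ge0.
Qed.

Lemma encode_continuous x : Mset x -> continuous (encode x).
Proof.
move=> Mx; apply: column_tail_continuous => c; have [a0 xa0] := encode_column_tail Mx c.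
by exists a0 => a b a0a; rewrite xa0.
Qed.

Lemma cvg_Mspace_prefix (u : nat -> Mspace) (x : Mspace) : u @ \oo --> x ->
  forall b, \forall n \near \oo, forall l, (l <= b)%N -> set_val (u n) l = set_val x l.
Proof.
move=> /cvg_MspaceP ux b; apply: filterS (ux _ (pow2m_gt0 b)) => n xun l lb.
apply: Mi_eq; [exact: (Mset_val (u n)).1|exact: (Mset_val x).1|].
rewrite distrC; apply: le_lt_trans (ler_dist_l1dist l (@l1_val x) (@l1_val (u n))) _.
exact: lt_le_trans xun (pow2m_le lb).
Qed.

Lemma encode_cvg (u : nat -> Mspace) (x : Mspace) : u @ \oo --> x ->
  (encode (set_val (u n)) : {compact-open, (nat * Fan)%type -> bool}) @[n --> \oo] -->
    (encode (set_val x) : {compact-open, (nat * Fan)%type -> bool}).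
Proof.
move=> ux; have Mx := Mset_val x; apply: compact_open_cvg_natFan.
  move=> [c [[a b]|]]; last exact: nearW.
  have [[i ->]|[m ->]] := double_cases c.
    by apply: filterS (cvg_Mspace_prefix ux i) => n uxi; rewrite !encode_odd uxi.
  apply: filterS (cvg_Mspace_prefix ux b) => n uxb; rewrite !encode_even.
  by congr (_ <= _); apply: eq_big_nat => l /andP[_ lb]; rewrite uxb // ltnW.
move=> c; have [[i ->]|[m ->]] := double_cases c.
  exists (2 ^ i)%N; apply: nearW => n a b ia.
  by rewrite !encode_odd !unary_bit_large //; exact: Mset_val.
(* From [a0] on, windows have mass below [2^-(m+1)] in [x], hence below [2^-m] in [u n]. *)
have [a0 a0x] := series_tail_lt (Mset_ge0 Mx) (Mset_cvg Mx) (pow2m_gt0 m.+1).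
exists a0; move/cvg_MspaceP: ux => /(_ _ (pow2m_gt0 m.+1)); apply: filterS.
move=> n xun a b a0a; rewrite !encode_even.
have xab : \sum_(a <= k < b) set_val x k < pow2m m.+1.
  by apply: le_lt_trans (a0x b); apply: ler_sum_subwindow => //; exact: Mset_ge0.
have := ler_sum_window a b (@l1_val (u n)) (@l1_val x).
rewrite l1distC -/(Mdist x (u n)) => uab.
have half := pow2m_half m; have pos := pow2m_gt0 m.+1.
by apply/idP/idP => mab; lra.
Qed.

Definition flag (g : nat * Fan -> bool) (m a b : nat) : bool :=
  g (m.*2, Some (a, b)) != g (m.*2, None).

Definition unary_count (g : nat * Fan -> bool) (i : nat) : nat :=
  \sum_(a < 2 ^ i) g (i.*2.+1, Some (nat_of_ord a, 0%N)).

Definition unary_digit (g : nat * Fan -> bool) (i : nat) : R :=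
  (unary_count g i)%:R * pow2m i.

Definition certified (g : nat * Fan -> bool) (i : nat) : bool :=
  [forall m : 'I_i.+1, forall a : 'I_i.+1,
     flag g m a i.+1 || (\sum_(a <= k < i.+1) unary_digit g k < pow2m m)].

Definition decode (g : nat * Fan -> bool) (i : nat) : R :=
  if certified g i then unary_digit g i else 0.

Lemma unary_digit_Mi g i : Mi i (unary_digit g i).
Proof.
exists (unary_count g i); split=> //.
apply: (@leq_trans (\sum_(a < 2 ^ i) 1)%N); last by rewrite sum1_card card_ord.
by apply: leq_sum => a _; exact: leq_b1.
Qed.

Lemma decode_Mi g i : Mi i (decode g i).
Proof. by rewrite /decode; case: ifP => _; [exact: unary_digit_Mi|exact: Mi0]. Qed.

Lemma decode_ge0 g i : 0 <= decode g i.
Proof. exact: Mi_ge0 (decode_Mi g i). Qed.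

Lemma decode_le g i : decode g i <= unary_digit g i.
Proof. by rewrite /decode; case: ifP => // _; exact: Mi_ge0 (unary_digit_Mi g i). Qed.

Lemma decode_window_lt g m A : (m <= A)%N ->
  (forall a b, (A <= a)%N -> ~~ flag g m a b) ->
  forall a b, (A <= a)%N -> \sum_(a <= k < b) decode g k < pow2m m.
Proof.
move=> mA unflagged a b Aa; elim: b => [|i IH]; first by rewrite big_geq // pow2m_gt0.
have [ai|ia] := leqP a i; last by rewrite big_geq ?pow2m_gt0.
rewrite big_nat_recr //= {2}/decode; case cert: (certified g i); last by rewrite addr0.
have mi : (m < i.+1)%N by rewrite ltnS (leq_trans mA) // (leq_trans Aa).
have ai' : (a < i.+1)%N by rewrite ltnS.
move/forallP: cert => /(_ (Ordinal mi)) /forallP /(_ (Ordinal ai')) /=.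
rewrite (negbTE (unflagged a i.+1 Aa)) /= => window.
apply: le_lt_trans window; rewrite big_nat_recr //= lerD2r.
by apply: ler_sum_nat => k _; exact: decode_le.
Qed.

Lemma decode_Mset g : continuous g -> Mset (decode g).
Proof.
move=> gC; split; first exact: decode_Mi.
have [A gA] := continuous_column_tail gC 0.
have unflagged a b : (A <= a)%N -> ~~ flag g 0 a b by move=> Aa; rewrite /flag /= gA ?eqxx.
have tail := decode_window_lt (leq0n A) unflagged.
rewrite /l1 /=; have -> : (fun i => `|decode g i|) = decode g.
  by apply: funext => i; rewrite ger0_norm // decode_ge0.
apply: (@is_cvg_series_bounded _ _ (@decode_ge0 g) (\sum_(0 <= k < A) decode g k + pow2m 0)).
move=> n; have [An|nA] := leqP A n.
  by rewrite /series /= (@big_cat_nat _ _ _ A 0 n) //= lerD2l ltW ?tail.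
apply: le_trans (series_nondecreasing (@decode_ge0 g) (ltnW nA)) _.
by rewrite lerDl ltW ?pow2m_gt0.
Qed.

Lemma sum_ord_ltn j n : (\sum_(a < n) (a < j))%N = minn j n.
Proof.
elim: n => [|n IH]; first by rewrite big_ord0 minn0.
by rewrite big_ord_recr /= IH; case: (ltnP n j) => nj; lia.
Qed.

Lemma unary_digit_encode x : Mset x -> unary_digit (encode x) = x.
Proof.
move=> Mx; apply: funext => i; have [j [ji xi]] := Mx.1 i.
rewrite /unary_digit /unary_count (eq_bigr (fun a : 'I_(2 ^ i) => nat_of_bool (a < j)%N)).
  by rewrite sum_ord_ltn (minn_idPl ji) xi.
by move=> a _; rewrite encode_odd xi -/(pow2m i) ler_pM2r ?pow2m_gt0 // ler_nat.
Qed.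

Lemma decode_encode x : Mset x -> decode (encode x) = x.
Proof.
move=> Mx; apply: funext => i; rewrite /decode unary_digit_encode //.
suff -> : certified (encode x) i by [].
apply/forallP => m; apply/forallP => a; rewrite /flag encode_even /= unary_digit_encode //.
by case: leP.
Qed.

Lemma decode_agree g1 g2 A :
  (forall c a b, (c <= A.*2.+1)%N -> (a <= 2 ^ A)%N -> (b <= A)%N ->
     g1 (c, Some (a, b)) = g2 (c, Some (a, b))) ->
  (forall c, (c <= A.*2.+1)%N -> g1 (c, None) = g2 (c, None)) ->
  forall l, (l < A)%N -> decode g1 l = decode g2 l.
Proof.
move=> g12 g12N; have A2A : (A <= 2 ^ A)%N by rewrite ltnW // ltn_expl.
have digit k : (k < A)%N -> unary_digit g1 k = unary_digit g2 k.
  move=> kA; rewrite /unary_digit /unary_count; congr (_%:R * _).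
  apply: eq_bigr => a _.
  have kA2 : (k.*2.+1 <= A.*2.+1)%N by rewrite ltnS leq_double ltnW.
  have aA : (a <= 2 ^ A)%N.
    by apply/ltnW/(leq_trans (ltn_ord a)); rewrite leq_pexp2l // ltnW.
  by rewrite g12.
move=> l lA; rewrite /decode (digit l lA); congr (if _ then _ else _).
apply: eq_forallb => m; apply: eq_forallb => a.
have mA2 : (m.*2 <= A.*2.+1)%N.
  by apply: leqW; rewrite leq_double ltnW // (leq_trans (ltn_ord m) lA).
have aA : (a <= 2 ^ A)%N by rewrite (leq_trans _ A2A) // ltnW // (leq_trans (ltn_ord a) lA).
congr (_ || _); first by rewrite /flag g12 ?g12N.
by congr (_ < _); apply: eq_big_nat => k /andP[_ kl]; rewrite digit // (leq_trans kl).
Qed.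

Lemma decode_cvg (u : nat -> nat * Fan -> bool) (g : nat * Fan -> bool) :
  (forall n, continuous (u n)) -> continuous g ->
  (u n : {compact-open, (nat * Fan)%type -> bool}) @[n --> \oo] -->
    (g : {compact-open, (nat * Fan)%type -> bool}) ->
  forall e : R, 0 < e -> \forall n \near \oo, l1dist (decode g) (decode (u n)) < e.
Proof.
move=> uC gC ug e e0; have [m me] := pow2m_lt (divr_gt0 e0 (ltr0n R 2)).
have [a0g ga0] := continuous_column_tail gC m.*2.
have [a0u ua0] := compact_open_cvg_column_tail gC ug m.*2.
pose A := maxn m (maxn a0g a0u).
have mA : (m <= A)%N by rewrite leq_maxl.
have a0gA : (a0g <= A)%N by rewrite (leq_trans (leq_maxl _ a0u)) ?leq_maxr.
have a0uA : (a0u <= A)%N by rewrite (leq_trans (leq_maxr a0g _)) ?leq_maxr.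
have box : \forall n \near \oo, forall c, (c < A.*2.+2)%N -> forall a, (a < (2 ^ A).+1)%N ->
    forall b, (b < A.+1)%N -> u n (c, Some (a, b)) = g (c, Some (a, b)).
  do 3![apply: near_forall_ltn => ? _]; exact: compact_open_cvg_pointwise ug _.
have boxN : \forall n \near \oo, forall c, (c < A.*2.+2)%N -> u n (c, None) = g (c, None).
  by apply: near_forall_ltn => c _; exact: compact_open_cvg_pointwise ug _.
apply: filterS (filterI (filterI box boxN) ua0) => n [[un unN] una0].
have head l : (l < A)%N -> decode g l = decode (u n) l.
  by apply: decode_agree => [c a b|c] *; rewrite (un, unN).
have tail h : (forall a b, (A <= a)%N -> ~~ flag h m a b) ->
    forall b, \sum_(A <= k < b) `|decode h k| <= pow2m m.
  move=> unflagged b; under eq_bigr do rewrite ger0_norm ?decode_ge0 //.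
  exact/ltW/(decode_window_lt mA unflagged).
have gfl a b : (A <= a)%N -> ~~ flag g m a b.
  by move=> Aa; rewrite /flag ga0 ?eqxx // (leq_trans a0gA).
have ufl a b : (A <= a)%N -> ~~ flag (u n) m a b.
  move=> Aa; rewrite /flag una0 ?(leq_trans a0uA) // unN ?eqxx //.
  by rewrite ltnS leqW // leq_double.
have := l1dist_agree_le (decode_Mset gC).2 (decode_Mset (uC n)).2 head
  (tail g gfl) (tail (u n) ufl).
lra.
Qed.

Definition Mspace_encode (x : Mspace) : qcb_exp (nat * Fan)%type bool :=
  exist _ (encode (set_val x) : {compact-open, (nat * Fan)%type -> bool})
    (mem_set (encode_continuous (@Mset_val x))).

Definition Mspace_decode (g : qcb_exp (nat * Fan)%type bool) : Mspace :=
  exist _ (decode (set_val g)) (mem_set (decode_Mset (@cont_maps_val _ _ g))).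

Lemma retract_Mspace_natFan_bool : retract Mspace (qcb_exp (nat * Fan)%type bool).
Proof.
exists Mspace_encode, Mspace_decode; split.
- apply: Mspace_seq_continuous => u x ux; apply: cvg_seqtop; apply/cvg_cont_mapsP.
  exact: encode_cvg ux.
- apply: seq_continuous_seqtop => u g /cvg_cont_mapsP ug; apply/cvg_MspaceP.
  exact: decode_cvg (fun n => @cont_maps_val _ _ (u n)) (@cont_maps_val _ _ g) ug.
- by move=> x; apply: val_inj; exact: decode_encode (@Mset_val x).
Qed.

(* [(c, (a, b))] is sent to [c 0^a (b+1) 0 0 ...] and [(c, oo)] to [c 0 0 ...]. *)
Definition natFan_to_Baire (p : nat * Fan) : BaireSpace := fun t =>
  match p, t with
  | (c, _), 0%N => c
  | (_, None), _.+1 => 0%N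
  | (_, Some (a, b)), t.+1 => if t == a then b.+1 else 0%N
  end.

Definition Baire_to_natFan (al : BaireSpace) : nat * Fan :=
  (al 0%N, match pselect (exists j, (fun j => al j.+1 != 0%N) j) with
    | left nz => Some (ex_minn nz, (al (ex_minn nz).+1).-1)
    | right _ => None
    end).

Lemma natFan_to_BaireK : cancel natFan_to_Baire Baire_to_natFan.
Proof.
case=> c [[a b]|]; rewrite /Baire_to_natFan /=; case: pselect => [nz|z] //.
- by case: ex_minnP => m /=; have [-> //|_] := eqVneq m a; rewrite ?eqxx.
- by exfalso; apply: z; exists a => /=; rewrite eqxx.
- by case: nz.
Qed.

Lemma natFan_to_Baire_continuous : continuous natFan_to_Baire.
Proof.
move=> p; apply/pointwise_cvgP => t; apply: (@column_tail_continuous _ (natFan_to_Baire^~ t)).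
move=> c; exists t => a b; case: t => //= t ta.
by case: eqP => // ta'; move: ta; rewrite ta' ltnn.
Qed.

Lemma nbhs_Baire_prefix (al : BaireSpace) K :
  nbhs al [set be : BaireSpace | forall j, (j <= K)%N -> be j = al j].
Proof.
have coord t : nbhs al [set be : BaireSpace | be t = al t].
  exact: (proj1 (pointwise_cvgP al _) (@cvg_id _ (nbhs al)) t _ (discrete_set1 (al t))).
elim: K => [|K IH].
  by apply: filterS (coord 0%N) => be be0 j; rewrite leqn0 => /eqP ->.
apply: filterS (filterI IH (coord K.+1)) => be [beK beK1] j.
by rewrite leq_eqVlt => /orP[/eqP ->|]; last exact: beK.
Qed.

Lemma Baire_to_natFanP (al : BaireSpace) :
  (Baire_to_natFan al = (al 0%N, None) /\ forall j, al j.+1 = 0%N) \/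
  (exists j, [/\ Baire_to_natFan al = (al 0%N, Some (j, (al j.+1).-1)), al j.+1 != 0%N &
       forall k, (k < j)%N -> al k.+1 = 0%N]).
Proof.
rewrite /Baire_to_natFan; case: pselect => nz; [right|left].
  case: ex_minnP => m alm mmin; exists m; split=> // k km.
  by apply/eqP; apply: contraTT km => /mmin; rewrite -leqNgt.
by split=> // j; apply/eqP; apply: contra_notT nz => alj; exists j.
Qed.

Lemma Baire_to_natFan_continuous : continuous Baire_to_natFan.
Proof.
move=> al V; have [[alE alz]|[j [alE alj jmin]]] := Baire_to_natFanP al; rewrite alE => alV.
  have [a0 Va0] := nbhs_Fan_None (nbhs_pair_column alV).
  apply: filterS (nbhs_Baire_prefix al a0) => be bea0 /=.
  have [[beE _]|[j [beE bej _]]] := Baire_to_natFanP be; rewrite beE bea0 //.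
    exact: nbhs_singleton alV.
  apply: Va0; rewrite leqNgt; apply/negP => ja0.
  by move: bej; rewrite bea0 // alz eqxx.
apply: filterS (nbhs_Baire_prefix al j.+1) => be bej /=.
have [[_ bez]|[j' [beE bej' j'min]]] := Baire_to_natFanP be.
  by move: alj; rewrite -bej // bez eqxx.
have j'j : j' = j.
  case: (ltngtP j' j) => // jj'.
    by move: bej'; rewrite (bej j'.+1 (ltnW jj')) jmin // eqxx.
  by move: alj; rewrite -(bej j.+1 (leqnn _)) j'min // eqxx.
by rewrite beE j'j !bej //; exact: nbhs_singleton alV.
Qed.

Lemma retract_natFan_Baire : retract (nat * Fan)%type BaireSpace.
Proof.
exists natFan_to_Baire, Baire_to_natFan; split.
- exact: natFan_to_Baire_continuous.
- exact: Baire_to_natFan_continuous.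
- exact: natFan_to_BaireK.
Qed.

Lemma retract_bool_nat : retract bool nat.
Proof.
exists nat_of_bool, (fun n => n != 0%N); split; try exact: discrete_continuous.
by case.
Qed.

Theorem proposition3p7 :
  retract Mspace (qcb_exp (nat * Fan)%type bool) /\
  retract Mspace (qcb_exp BaireSpace nat).
Proof.
split; first exact: retract_Mspace_natFan_bool.
apply: retract_trans retract_Mspace_natFan_bool _.
exact: retract_qcb_exp retract_natFan_Baire retract_bool_nat.
Qed.
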